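(* Let $\Omega=(0,1)\times(0,1)\subset\mathbb{R}^2$ and let $h:[0,1]\to\mathbb{R}$ be a bounded function with $h(0)=0$, $h(x_1)>0$ for $x_1\in(0,1]$, $h\in C^1(0,1]$, and suppose there exist constants $C>0$ and $\theta\in(0,1)$ such that $$\sup_{x\in\Omega,\ 0<r\le d}\frac{\int_{B(x,r)\cap\Omega}h(x_1)^{-1}\,dx}{|B(x,r)\cap\Omega|^{\theta}}\le C,$$ where $d$ is the diameter of $\Omega$. Then $\mathcal{H}_h^1(\Omega)$ is continuously embedded into $W^{1,1}(\Omega)$.
   Context: $B(x,r)$ is the Euclidean ball with center $x$ and radius $r$, $|\cdot|$ is Lebesgue measure. $\mathcal{H}_h^1(\Omega)=\{u\in L^2(\Omega)\mid \partial_{x_1}u\in L^2(\Omega),\ \sqrt{h(x_1)}\,\partial_{x_2}u\in L^2(\Omega)\}$ (distributional derivatives), with norm $\|u\|_{\mathcal{H}_h^1(\Omega)}=\big(\|u\|_{L^2(\Omega)}^2+\|\partial_{x_1}u\|_{L^2(\Omega)}^2+\|\sqrt{h(x_1)}\partial_{x_2}u\|_{L^2(\Omega)}^2\big)^{1/2}$. *)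

From HB Require Import structures.
From mathcomp Require Import all_boot all_order all_algebra.
From mathcomp Require Import all_classical all_reals all_analysis.
Set Implicit Arguments. Unset Strict Implicit. Unset Printing Implicit Defensive.
Import Order.TTheory GRing.Theory Num.Theory.
Import numFieldNormedType.Exports.
Local Open Scope classical_set_scope.
Local Open Scope ring_scope.

Section Defs.
Variable R : realType.

Definition leb2 := ((@lebesgue_measure R) \x (@lebesgue_measure R))%E.

Definition Omega : set (R * R) := `]0, 1[%classic `*` `]0, 1[%classic.

Definition eball (x : R * R) (r : R) : set (R * R) :=
  [set y | (y.1 - x.1) ^+ 2 + (y.2 - x.2) ^+ 2 < r ^+ 2].

Definition diamOmega : R := Num.sqrt 2.

Definition pd1 (f : R * R -> R) : R * R -> R :=
  fun z => derive1 (fun t => f (t, z.2)) z.1.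
Definition pd2 (f : R * R -> R) : R * R -> R :=
  fun z => derive1 (fun t => f (z.1, t)) z.2.

Definition iter_pd (s : seq bool) (f : R * R -> R) : R * R -> R :=
  foldr (fun (b : bool) g => if b then pd1 g else pd2 g) f s.

Definition smooth2 (f : R * R -> R) : Prop :=
  forall s : seq bool, continuous (iter_pd s f) /\
    (forall z : R * R, derivable (fun t => iter_pd s f (t, z.2)) z.1 1 /\
                       derivable (fun t => iter_pd s f (z.1, t)) z.2 1).

Definition test_fun (phi : R * R -> R) : Prop :=
  smooth2 phi /\
  exists K : set (R * R), compact K /\ K `<=` Omega /\
    (forall z, ~ K z -> phi z = 0).

Definition weak_pd1 (u g : R * R -> R) : Prop :=
  forall phi, test_fun phi ->
    leb2.-integrable Omega (fun z => (g z * phi z)%:E) /\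
    (\int[leb2]_(z in Omega) (u z * pd1 phi z)%:E =
       - \int[leb2]_(z in Omega) (g z * phi z)%:E)%E.
Definition weak_pd2 (u g : R * R -> R) : Prop :=
  forall phi, test_fun phi ->
    leb2.-integrable Omega (fun z => (g z * phi z)%:E) /\
    (\int[leb2]_(z in Omega) (u z * pd2 phi z)%:E =
       - \int[leb2]_(z in Omega) (g z * phi z)%:E)%E.

Definition wL2 (w : R * R -> R) (f : R * R -> R) : Prop :=
  measurable_fun Omega f /\
  (\int[leb2]_(z in Omega) (w z * f z ^+ 2)%:E < +oo)%E.

Definition in_H1h (h : R -> R) (u g1 g2 : R * R -> R) : Prop :=
  wL2 (fun _ => 1) u /\ weak_pd1 u g1 /\ weak_pd2 u g2 /\
  wL2 (fun _ => 1) g1 /\ wL2 (fun z => h z.1) g2.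

Definition H1h_norm (h : R -> R) (u g1 g2 : R * R -> R) : R :=
  Num.sqrt (fine (\int[leb2]_(z in Omega) (u z ^+ 2)%:E +
                  \int[leb2]_(z in Omega) (g1 z ^+ 2)%:E +
                  \int[leb2]_(z in Omega) (h z.1 * g2 z ^+ 2)%:E)%E).

Definition W11_norm (u g1 g2 : R * R -> R) : \bar R :=
  (\int[leb2]_(z in Omega) `|u z|%:E + \int[leb2]_(z in Omega) `|g1 z|%:E +
   \int[leb2]_(z in Omega) `|g2 z|%:E)%E.

(* h in C^1(0,1]: differentiable on (0,1) with continuous derivative on (0,1],
   one-sided at 1 (derivative extends continuously to 1, h left-continuous at 1) *)
Definition C1_0_1 (h : R -> R) : Prop :=
  (forall t, 0 < t < 1 -> derivable h t 1) /\
  {within `]0, 1[, continuous (derive1 h)} /\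
  cvg (derive1 h x @[x --> (1:R)^'-]) /\
  h x @[x --> (1:R)^'-] --> h 1.

End Defs.

(* Everything follows from the Cauchy-Schwarz inequality.  As |Omega| = 1,
   int |u| <= ||u||_2 and int |d1 u| <= ||d1 u||_2; writing
   |d2 u| = (sqrt h |d2 u|) * h^(-1/2) gives
   int |d2 u| <= ||sqrt h d2 u||_2 * (int h^-1)^(1/2), and the ball condition,
   applied to the single ball of radius diam Omega centred at (1/2, 1/2), which
   contains Omega, bounds int_Omega h^-1 by C.  So K = 2 + sqrt C works.
   Cauchy-Schwarz itself is obtained by integrating the pointwise inequality
   2 t |f| <= t^2 a + b, valid whenever f^2 <= a b, and optimising over t > 0. *)

From mathcomp Require Import all_boot all_order all_algebra.
From mathcomp Require Import all_classical all_reals all_analysis.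
From mathcomp Require Import ring lra.
Import Order.TTheory GRing.Theory Num.Theory.
Import numFieldNormedType.Exports.
Import measurable_realfun.
Local Open Scope classical_set_scope.
Local Open Scope ring_scope.

Lemma amgm_le_sqr_mul (R : realFieldType) (y a b t : R) :
  0 <= a -> 0 <= b -> 0 < t -> y ^+ 2 <= a * b -> 2 * t * `|y| <= t ^+ 2 * a + b.
Proof.
move=> a0 b0 t0 yab.
have lhs0 : 0 <= 2 * t * `|y| by rewrite !mulr_ge0 // ltW.
have rhs0 : 0 <= t ^+ 2 * a + b by rewrite addr_ge0 // mulr_ge0 // sqr_ge0.
rewrite -(ler_pXn2r (_ : 0 < 2)%N) ?nnegrE //.
have sq_gap : 0 <= (t ^+ 2 * a - b) ^+ 2 by exact: sqr_ge0.
have ty : (2 * t * `|y|) ^+ 2 = 4 * t ^+ 2 * y ^+ 2.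
  by rewrite !exprMn real_normK ?num_real //; ring.
rewrite ty; apply: (le_trans (y := 4 * t ^+ 2 * (a * b))).
  by rewrite ler_wpM2l // mulr_ge0 // sqr_ge0.
nra.
Qed.

Lemma le_sqrtM_of_amgm (R : rcfType) (x a b : R) :
  0 <= x -> 0 <= a -> 0 <= b ->
  (forall t, 0 < t -> 2 * t * x <= t ^+ 2 * a + b) -> x <= Num.sqrt (a * b).
Proof.
move=> x0 a0 b0 amgm.
rewrite -(ger0_norm x0) -sqrtr_sqr ler_sqrt ?mulr_ge0 //.
have [xpos|x_le0] := ltP 0 x; last first.
  have -> : x = 0 by apply: le_anti; rewrite x_le0 x0.
  by rewrite expr0n mulr_ge0.
have [apos|a_le0] := ltP 0 a; last first.
  have a_eq0 : a = 0 by apply: le_anti; rewrite a_le0 a0.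
  have := amgm ((b + 1) / x) (divr_gt0 (ltr_wpDl b0 ltr01) xpos).
  by rewrite a_eq0 mulr0 add0r -mulrA divfK ?gt_eqF //; lra.
have := amgm (x / a) (divr_gt0 xpos apos).
have -> : 2 * (x / a) * x = 2 * (x ^+ 2 / a) by field; rewrite gt_eqF.
have -> : (x / a) ^+ 2 * a = x ^+ 2 / a by field; rewrite gt_eqF.
move=> amgm_xa; rewrite mulrC -ler_pdivrMr //; lra.
Qed.

Section integral_cauchy_schwarz.
Context d (T : measurableType d) (R : realType) (mu : {measure set T -> \bar R}).
Variables (D : set T) (f a b : T -> R) (A B : R).
Hypotheses (mD : measurable D) (mf : measurable_fun D f)
  (ma : measurable_fun D a) (mb : measurable_fun D b).
Hypotheses (a0 : forall z, D z -> 0 <= a z) (b0 : forall z, D z -> 0 <= b z).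
Hypothesis f2_le_ab : forall z, D z -> f z ^+ 2 <= a z * b z.
Hypotheses (intA : (\int[mu]_(z in D) (a z)%:E <= A%:E)%E)
  (intB : (\int[mu]_(z in D) (b z)%:E <= B%:E)%E).

Let A0 : 0 <= A.
Proof.
by rewrite -lee_fin (le_trans _ intA) // integral_ge0 // => z Dz; rewrite lee_fin a0.
Qed.

Let B0 : 0 <= B.
Proof.
by rewrite -lee_fin (le_trans _ intB) // integral_ge0 // => z Dz; rewrite lee_fin b0.
Qed.

Let mabsf : measurable_fun D (fun z => `|f z|%:E).
Proof. by apply/measurable_EFinP; exact: measurableT_comp. Qed.

Lemma integral_abs_amgm t : 0 < t ->
  ((2 * t)%:E * \int[mu]_(z in D) `|f z|%:E <= (t ^+ 2 * A + B)%:E)%E.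
Proof.
move=> t0; have t2_0 : 0 <= t ^+ 2 by exact: sqr_ge0.
rewrite -ge0_integralZl_EFin //; last by rewrite mulr_ge0 // ltW.
apply: (le_trans (y := \int[mu]_(z in D) ((t ^+ 2)%:E * (a z)%:E + (b z)%:E))%E).
  apply: ge0_le_integral => //.
  - by move=> z _; rewrite -EFinM lee_fin !mulr_ge0 // ltW.
  - by apply: emeasurable_funM => //; exact: measurable_cst.
  - apply: emeasurable_funD; last exact/measurable_EFinP.
    by apply: emeasurable_funM; [exact: measurable_cst | exact/measurable_EFinP].
  - by move=> z Dz; rewrite -EFinM -EFinD lee_fin amgm_le_sqr_mul ?a0 ?b0 ?f2_le_ab.
rewrite ge0_integralD //; last 3 first.
- by move=> z Dz; rewrite mule_ge0 // lee_fin a0.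
- by apply: emeasurable_funM; [exact: measurable_cst | exact/measurable_EFinP].
- exact/measurable_EFinP.
rewrite ge0_integralZl_EFin //; last exact/measurable_EFinP.
rewrite EFinD (EFinM (t ^+ 2)); apply: leeD => //.
by apply: lee_wpmul2l.
Qed.

Lemma integrable_abs_le_sqrtM :
  mu.-integrable D (EFin \o f) /\
  (\int[mu]_(z in D) `|f z|%:E <= (Num.sqrt (A * B))%:E)%E.
Proof.
have int_ge0 : (0 <= \int[mu]_(z in D) `|f z|%:E)%E.
  by apply: integral_ge0 => z _; rewrite lee_fin.
have int_fin : (\int[mu]_(z in D) `|f z|%:E)%E \is a fin_num.
  have := integral_abs_amgm 1 ltr01; rewrite mulr1 -lee_pdivlMl // => bound1.
  by rewrite ge0_fin_numE // (le_lt_trans bound1) // -EFinM ltry.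
split.
  apply/integrableP; split; first exact/measurable_EFinP.
  by rewrite -ge0_fin_numE.
rewrite -(fineK int_fin) lee_fin le_sqrtM_of_amgm ?fine_ge0 // => t t0.
by rewrite -lee_fin EFinM fineK // integral_abs_amgm.
Qed.

End integral_cauchy_schwarz.

Section unit_square.
Context {R : realType}.
Local Notation Omega := (@Omega R).
Local Notation leb2 := (@leb2 R).

Lemma measurable_Omega : measurable Omega.
Proof. by apply: measurableX; exact: measurable_itv. Qed.

Lemma OmegaP {z : R * R} : Omega z -> (0 < z.1 < 1) /\ (0 < z.2 < 1).
Proof. by case=> /=; rewrite !in_itv /= => -> ->. Qed.

Lemma leb2_Omega : leb2 Omega = 1%E.
Proof.
have unit_itv : lebesgue_measure (`]0, 1[%classic : set R) = 1%E.
  by rewrite lebesgue_measure_itv /= lte_fin ltr01 oppr0 adde0.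
rewrite /leb2 /Omega product_measure1E; try exact: measurable_itv.
by rewrite -[RHS]mule1; congr (_ * _)%E; exact: unit_itv.
Qed.

Lemma eball_center_diam_Omega :
  eball (2^-1, 2^-1) (diamOmega R) `&` Omega = Omega.
Proof.
apply/seteqP; split => z; first by case.
move=> Oz; split => //; have [/andP[? ?] /andP[? ?]] := OmegaP Oz.
rewrite /eball /diamOmega /= sqr_sqrtr //; nra.
Qed.

Lemma measurable_fun_Omega_fst {k : R -> R} :
  {in `]0, 1[%classic, continuous k} -> measurable_fun Omega (fun z => k z.1).
Proof.
move=> ck.
have mfst : measurable_fun Omega fst.
  exact: measurable_funS measurableT (@subsetT _ _) measurable_fst.
have fst_Omega : fst @` Omega `<=` `]0, 1[%classic by move=> _ [z [? _] <-].
apply: measurable_comp (measurable_itv _) fst_Omega _ mfst.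
exact: open_continuous_measurable_fun (interval_open _ _) ck.
Qed.

Lemma measurable_fun_Omega_fst_derivable {k : R -> R} :
  (forall t, 0 < t < 1 -> derivable k t 1) -> (forall t, 0 < t < 1 -> k t != 0) ->
  measurable_fun Omega (fun z => k z.1) /\ measurable_fun Omega (fun z => (k z.1)^-1).
Proof.
move=> kder kne0.
have kcont : {in `]0, 1[%classic, continuous k}.
  move=> t; rewrite inE /= in_itv /= => /kder.
  by move=> /derivable1_diffP/differentiable_continuous.
split; first exact: measurable_fun_Omega_fst.
apply: (@measurable_fun_Omega_fst (fun t => (k t)^-1)) => t t01.
apply: continuousV (kcont t t01).
by move: t01; rewrite inE /= in_itv /= => /kne0.
Qed.

Lemma integral_Omega_le_of_ball_bound {g : R * R -> \bar R} {C theta : R} :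
  (forall x r, Omega x -> 0 < r <= diamOmega R ->
    (\int[leb2]_(y in eball x r `&` Omega) g y <=
     (C * (fine (leb2 (eball x r `&` Omega))) `^ theta)%:E)%E) ->
  (\int[leb2]_(z in Omega) g z <= C%:E)%E.
Proof.
move=> ball_bound.
have center : Omega (2^-1, 2^-1) by split; rewrite /= in_itv /=; apply/andP; split; lra.
have := ball_bound _ (diamOmega R) center.
rewrite eball_center_diam_Omega leb2_Omega /= powR1 mulr1.
by apply; rewrite lexx andbT sqrtr_gt0.
Qed.

Lemma wL2_fin_num (w f : R * R -> R) : (forall z, Omega z -> 0 <= w z) ->
  wL2 w f -> (\int[leb2]_(z in Omega) (w z * f z ^+ 2)%:E)%E \is a fin_num.
Proof.
move=> w0 [_ intf]; rewrite ge0_fin_numE // integral_ge0 // => z Oz.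
by rewrite lee_fin mulr_ge0 ?w0 ?sqr_ge0.
Qed.

Lemma wL2_integrable_le (w f : R * R -> R) (A : R) :
  measurable_fun Omega w -> measurable_fun Omega (fun z => (w z)^-1) ->
  (forall z, Omega z -> 0 < w z) ->
  (\int[leb2]_(z in Omega) ((w z)^-1)%:E <= A%:E)%E -> wL2 w f ->
  leb2.-integrable Omega (EFin \o f) /\
  (\int[leb2]_(z in Omega) `|f z|%:E <=
    (Num.sqrt (fine (\int[leb2]_(z in Omega) (w z * f z ^+ 2)%:E)) * Num.sqrt A)%:E)%E.
Proof.
move=> mw mwV w0 intA [mf intf].
have fin := @wL2_fin_num w f (fun z Oz => ltW (w0 z Oz)) (conj mf intf).
rewrite -sqrtrM ?fine_ge0 ?integral_ge0 //; last first.
  by move=> z Oz; rewrite lee_fin mulr_ge0 ?sqr_ge0 // ltW ?w0.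
apply: (@integrable_abs_le_sqrtM _ _ _ leb2 Omega f (fun z => w z * f z ^+ 2)) intA => //.
- exact: measurable_Omega.
- exact: measurable_funM mw (measurable_funX 2 mf).
- by move=> z Oz; rewrite mulr_ge0 ?sqr_ge0 // ltW ?w0.
- by move=> z Oz; rewrite invr_ge0 ltW ?w0.
- by move=> z Oz; rewrite mulrAC mulfV ?mul1r ?gt_eqF ?w0.
- by rewrite fineK.
Qed.

Lemma wL2_1_fin_num {f : R * R -> R} :
  wL2 (fun _ => 1) f -> (\int[leb2]_(z in Omega) (f z ^+ 2)%:E)%E \is a fin_num.
Proof.
move=> /(@wL2_fin_num (fun _ => 1) f (fun _ _ => ler01)).
by under eq_integral do rewrite mul1r.
Qed.

Lemma wL2_1_integrable_le {f : R * R -> R} : wL2 (fun _ => 1) f ->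
  leb2.-integrable Omega (EFin \o f) /\
  (\int[leb2]_(z in Omega) `|f z|%:E <=
    (Num.sqrt (fine (\int[leb2]_(z in Omega) (f z ^+ 2)%:E)))%:E)%E.
Proof.
have int1 : (\int[leb2]_(z in Omega) (1^-1)%:E <= 1%:E)%E.
  rewrite invr1 integral_cst; last exact: measurable_Omega.
  by rewrite [X in (_ * X)%E]leb2_Omega mule1.
move=> Lf; have := @wL2_integrable_le (fun _ => 1) f 1
  (measurable_cst _) (measurable_cst _) (fun _ _ => ltr01) int1 Lf.
have one_mul : (\int[leb2]_(z in Omega) (1 * f z ^+ 2)%:E =
    \int[leb2]_(z in Omega) (f z ^+ 2)%:E)%E.
  by apply: eq_integral => z _; rewrite mul1r.
by rewrite sqrtr1 mulr1 one_mul.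
Qed.

Lemma H1h_normE {h : R -> R} {u g1 g2 : R * R -> R} :
  (forall z, Omega z -> 0 <= h z.1) -> in_H1h h u g1 g2 ->
  H1h_norm h u g1 g2 =
  Num.sqrt (fine (\int[leb2]_(z in Omega) (u z ^+ 2)%:E)%E +
            fine (\int[leb2]_(z in Omega) (g1 z ^+ 2)%:E)%E +
            fine (\int[leb2]_(z in Omega) (h z.1 * g2 z ^+ 2)%:E)%E).
Proof.
move=> h0 [Lu [_ [_ [Lg1 Lg2]]]].
have finu := wL2_1_fin_num Lu; have fing1 := wL2_1_fin_num Lg1.
have fing2 := @wL2_fin_num (fun z => h z.1) g2 h0 Lg2.
have fin12 : (\int[leb2]_(z in Omega) (u z ^+ 2)%:E +
    \int[leb2]_(z in Omega) (g1 z ^+ 2)%:E)%E \is a fin_num.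
  by rewrite fin_numD finu fing1.
by rewrite /H1h_norm (fineD fin12 fing2) (fineD finu fing1).
Qed.

End unit_square.

Lemma sqrt_add3_le (R : rcfType) (x y z s : R) :
  0 <= x -> 0 <= y -> 0 <= z -> 0 <= s ->
  Num.sqrt x + Num.sqrt y + Num.sqrt z * Num.sqrt s <=
  (2 + Num.sqrt s) * Num.sqrt (x + y + z).
Proof.
move=> x0 y0 z0 s0; set N := x + y + z.
have le_sqrtN c : 0 <= c -> c <= N -> Num.sqrt c <= Num.sqrt N.
  by move=> c0 cN; rewrite ler_sqrt // (le_trans c0 cN).
have [xN yN zN] : [/\ x <= N, y <= N & z <= N] by rewrite /N; split; lra.
have := le_sqrtN x x0 xN; have := le_sqrtN y y0 yN.
have := ler_wpM2r (sqrtr_ge0 s) (le_sqrtN z z0 zN).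
have := sqrtr_ge0 s; nra.
Qed.

Theorem lemma2p3 (R : realType) (h : R -> R) :
  (exists M : R, forall t, 0 <= t <= 1 -> `|h t| <= M) ->
  h 0 = 0 ->
  (forall t, 0 < t <= 1 -> 0 < h t) ->
  C1_0_1 h ->
  (exists (C theta : R), 0 < C /\ 0 < theta < 1 /\
     forall (x : R * R) (r : R), @Omega R x -> 0 < r <= diamOmega R ->
       (\int[@leb2 R]_(y in eball x r `&` @Omega R) ((h y.1)^-1)%:E <=
        (C * (fine (@leb2 R (eball x r `&` @Omega R))) `^ theta)%:E)%E) ->
  exists K : R, 0 < K /\
    forall u g1 g2 : R * R -> R, in_H1h h u g1 g2 ->
      (@leb2 R).-integrable (@Omega R) (EFin \o u) /\
      (@leb2 R).-integrable (@Omega R) (EFin \o g1) /\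
      (@leb2 R).-integrable (@Omega R) (EFin \o g2) /\
      (W11_norm u g1 g2 <= (K * H1h_norm h u g1 g2)%:E)%E.
Proof.
move=> _ _ hpos [hder _] [C [theta [C0 [_ hball]]]].
have h_Omega z : @Omega R z -> 0 < h z.1.
  by move=> /OmegaP[/andP[z0 z1] _]; rewrite hpos // z0 ltW.
have hne0 t : 0 < t < 1 -> h t != 0.
  by move=> /andP[t0 t1]; rewrite gt_eqF // hpos // t0 ltW.
have [mh mhV] := measurable_fun_Omega_fst_derivable hder hne0.
have intV := integral_Omega_le_of_ball_bound hball.
exists (2 + Num.sqrt C); split; first by rewrite ltr_wpDr ?sqrtr_ge0.
move=> u g1 g2 Hu; have [Lu [_ [_ [Lg1 Lg2]]]] := Hu.
have [iu bu] := wL2_1_integrable_le Lu.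
have [ig1 bg1] := wL2_1_integrable_le Lg1.
have [ig2 bg2] := @wL2_integrable_le _ (fun z => h z.1) g2 C mh mhV h_Omega intV Lg2.
do 3!split => //.
rewrite /W11_norm (H1h_normE (fun z Oz => ltW (h_Omega z Oz)) Hu).
apply: le_trans (leeD (leeD bu bg1) bg2) _.
rewrite -!EFinD lee_fin sqrt_add3_le ?(ltW C0) //.
all: apply/fine_ge0/integral_ge0 => z Oz; rewrite lee_fin.
1, 2: exact: sqr_ge0.
by rewrite mulr_ge0 ?sqr_ge0 // ltW ?h_Omega.
Qed.
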